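(* If $f_0, f_1, \dots : X \to \mathbb{R}$ are limsup functions converging uniformly to $f : X \to \mathbb{R}$, then $f$ is a limsup function.
   Context: Let $A$ be a non-empty countable set and $T$ a pruned tree on $A$ (a set of finite sequences of elements of $A$, closed under initial segments, in which every sequence has a proper extension in $T$). Let $X$ be the set of infinite branches of $T$, with the topology generated by the cylinder sets $O(s) = \{x \in X : s \text{ is an initial segment of } x\}$, $s \in T$. A function $f : X \to \mathbb{R}$ is a limsup function if there exists $u : T \to \mathbb{R}$ with $f(x) = \limsup_{t\to\infty} u(x_0,\dots,x_t)$ for every $x \in X$. *)

From HB Require Import structures.
From mathcomp Require Import all_boot all_order all_algebra.
From mathcomp Require Import all_classical all_reals all_analysis.
Set Implicit Arguments. Unset Strict Implicit. Unset Printing Implicit Defensive.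
Import Order.TTheory GRing.Theory Num.Theory.
Local Open Scope ring_scope.

Definition is_tree (A : Type) (T : seq A -> Prop) : Prop :=
  forall s n, T s -> T (take n s).

Definition pruned (A : Type) (T : seq A -> Prop) : Prop :=
  forall s, T s -> exists t, t <> [::] /\ T (s ++ t).

Definition is_branch (A : Type) (T : seq A -> Prop) (x : nat -> A) : Prop :=
  forall n, T (mkseq x n).

Definition branches (A : Type) (T : seq A -> Prop) :=
  {x : nat -> A | is_branch T x}.

(* f : X -> R is a limsup function: there is u : T -> R with
   f x = limsup_{t -> oo} u (x_0, ..., x_t) for all x in X.
   u is given as a function on all of seq A; only its values on T matter,
   since every (x_0,...,x_t) of a branch lies in T. *)
Definition limsup_fun (R : realType) (A : Type) (T : seq A -> Prop)
    (f : branches T -> R) : Prop :=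
  exists u : seq A -> R, forall x : branches T,
    ((f x)%:E = limn_esup (fun t : nat => (u (mkseq (proj1_sig x) t.+1))%:E))%E.

From HB Require Import structures.
From mathcomp Require Import all_boot all_order all_algebra.
From mathcomp Require Import all_classical all_reals all_analysis.
From mathcomp Require Import zify lra.
Set Implicit Arguments. Unset Strict Implicit. Unset Printing Implicit Defensive.
Import Order.TTheory GRing.Theory Num.Theory.
Local Open Scope ring_scope.
Local Open Scope classical_set_scope.

(* Pass to a subsequence g_k := fs (N k) with |g_k - f| < eps_k := 1/(k+1)
   and choose witnesses w_k with g_k x = limsup_t w_k (x_0..x_t).  Call a
   prefix s a "c-hit of w_k" when c - eps_k < w_k s.  Along a branch x:
   - if c < f x, every w_k has infinitely many c-hits (hits_io);
   - if c > f x + 2 eps_k, then w_k has only finitely many c-hits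
     (hits_finite).
   These infinitary conditions are merged into one limsup by a counting code:
   level m is reached for c at s when each of w_0, ..., w_m has at least m
   c-hits among the prefixes of s, and u(s) is the largest q_j (q enumerates
   the rationals, j < |s|) such that some level m >= j is reached for q_j
   exactly at s.  When every w_k hits infinitely often, every level is
   eventually reached, so u >= q_j infinitely often (code_io_ge); when one
   w_k hits finitely often, reachable levels are bounded and u eventually
   stays below any bound b >= c (code_eventually_lt).  A squeeze between
   rationals (limn_esup_squeeze) then gives f x = limsup_t u (x_0..x_t). *)

Definition infinitely_often (P : nat -> Prop) : Prop :=
  forall N, exists2 t, (N <= t)%N & P t.

Section LimsupFacts.
Variable R : realType.
Local Open Scope ereal_scope.
Implicit Types (u : (\bar R)^nat) (b : \bar R).

Lemma limn_esupE u : limn_esup u = ereal_inf (range (esups u)).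
Proof. by rewrite limn_esup_lim; apply: cvg_lim => //; exact: cvg_esups_inf. Qed.

Lemma limn_esup_lt_ev u b : limn_esup u < b -> \forall t \near \oo, u t < b.
Proof.
rewrite limn_esupE => /ereal_inf_lt[_ [n _ <-]] hn; exists n => // k nk.
by apply: le_lt_trans hn; apply: ereal_sup_ubound; exists k.
Qed.

Lemma limn_esup_gt_io u b : b < limn_esup u -> infinitely_often (fun t => b < u t).
Proof.
rewrite limn_esupE => hb n.
have : b < esups u n by apply: lt_le_trans hb _; apply: ereal_inf_lbound; exists n.
by move=> /ereal_sup_gt[_ [k nk <-]] bk; exists k.
Qed.

Lemma limn_esup_le_ev u b : (\forall t \near \oo, u t <= b) -> limn_esup u <= b.
Proof.
move=> [n _ hn]; rewrite limn_esupE; apply: (@le_trans _ _ (esups u n)).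
  by apply: ereal_inf_lbound; exists n.
by apply: ge_ereal_sup => _ [k nk <-]; apply: hn.
Qed.

Lemma limn_esup_ge_io u b : infinitely_often (fun t => b <= u t) -> b <= limn_esup u.
Proof.
move=> h; rewrite limn_esupE; apply: le_ereal_inf_tmp => _ [n _ <-].
have [k nk bk] := h n; apply: le_trans bk _; apply: ereal_sup_ubound; exists k => //.
Qed.

End LimsupFacts.

Section CountingAlongNat.
Variable P : pred nat.

Lemma count_iotaS t : count P (iota 0 t.+1) = (count P (iota 0 t) + P t)%N.
Proof. by rewrite -addn1 iotaD count_cat /= addn0. Qed.

Lemma count_iota_mono t t' : (t <= t')%N -> (count P (iota 0 t) <= count P (iota 0 t'))%N.
Proof. by move=> tt'; rewrite -(subnKC tt') iotaD count_cat leq_addr. Qed.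

Lemma count_io_unbounded : infinitely_often P ->
  forall m, \forall t \near \oo, (m <= count P (iota 0 t))%N.
Proof.
move=> Pio; elim=> [|m [N _ IH]]; first exact: nearW.
have [t Nt Pt] := Pio N; exists t.+1 => // t' /= tt'.
apply: leq_trans _ (count_iota_mono tt'); rewrite count_iotaS Pt addn1 ltnS.
exact: IH.
Qed.

Lemma count_eventually_false_bounded : (\forall t \near \oo, ~~ P t) ->
  exists B, forall t, (count P (iota 0 t) <= B)%N.
Proof.
move=> [N _ notP]; exists N => t; case: (leqP t N) => [tN|Nt].
  by rewrite (leq_trans (count_size _ _)) // size_iota.
rewrite -(subnKC (ltnW Nt)) iotaD count_cat.
have -> : count P (iota (0 + N) (t - N)) = 0%N.
  rewrite (@eq_in_count _ _ pred0) ?count_pred0 // => i.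
  by rewrite mem_iota add0n => /andP[Ni _]; apply/negbTE/notP.
by rewrite addn0 (leq_trans (count_size _ _)) // size_iota.
Qed.

End CountingAlongNat.

Lemma nondecreasing_bool_stable (b : nat -> bool) : (forall t, b t -> b t.+1) ->
  \forall t \near \oo, b t.+1 = b t.
Proof.
move=> bS; have [[t0 bt0]|never] := pselect (exists t, b t); last first.
  have bF t : b t = false by apply/negP => bt; apply: never; exists t.
  by apply: nearW => t; rewrite !bF.
have always t : (t0 <= t)%N -> b t.
  by elim: t => [|t IH]; [rewrite leqn0 => /eqP <-|rewrite leq_eqVlt => /orP[/eqP <-|/IH/bS]].
by exists t0 => // t /= t0t; rewrite !always // leqW.
Qed.

Lemma take_mkseq (A : Type) (x : nat -> A) i n : (i <= n)%N ->
  take i (mkseq x n) = mkseq x i.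
Proof. by move=> le_in; rewrite /mkseq -map_take take_iota (minn_idPl le_in). Qed.

Section CountingCode.
Variables (R : realType) (A : Type) (hit : R -> nat -> seq A -> bool) (q : nat -> R).
Hypothesis hit_anti : forall c c' k s, c <= c' -> hit c' k s -> hit c k s.

Definition hits c k s : nat :=
  count (fun i => hit c k (take i.+1 s)) (iota 0 (size s)).

Definition reached c s m : bool := all (fun k => m <= hits c k s)%N (iota 0 m.+1).

Definition fresh c s j : bool :=
  has (fun m => reached c s m && ~~ reached c (take (size s).-1 s) m)
      (iota j (size s).+1).

Definition code s : R :=
  \big[Num.max/ - (size s)%:R]_(j < size s | fresh (q j) s j) q j.

Lemma reached_le_size c s m : reached c s m -> (m <= size s)%N.
Proof.
move=> /allP /(_ 0%N); rewrite mem_iota => /(_ isT) m_le.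
by rewrite (leq_trans m_le) // /hits (leq_trans (count_size _ _)) // size_iota.
Qed.

Lemma reached_anti c c' s m : c <= c' -> reached c' s m -> reached c s m.
Proof.
move=> le_cc' /allP reached_c'; apply/allP => k k_in.
apply: leq_trans (reached_c' k k_in) _; apply: sub_count => i.
exact: hit_anti.
Qed.

Variable x : nat -> A.
Local Notation pref t := (mkseq x t).

Lemma hits_pref c k t :
  hits c k (pref t) = count (fun i => hit c k (pref i.+1)) (iota 0 t).
Proof.
rewrite /hits size_mkseq; apply: eq_in_count => i.
by rewrite mem_iota add0n => lt_it; rewrite take_mkseq.
Qed.

Lemma reached_pref_mono c m t t' : (t <= t')%N ->
  reached c (pref t) m -> reached c (pref t') m.
Proof.
move=> le_tt' /allP reached_t; apply/allP => k k_in.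
by rewrite hits_pref (leq_trans _ (count_iota_mono _ le_tt')) // -hits_pref reached_t.
Qed.

Lemma take_pref_last t : take (size (pref t.+1)).-1 (pref t.+1) = pref t.
Proof. by rewrite size_mkseq take_mkseq. Qed.

Lemma reached_eventually c m :
  (forall k, infinitely_often (fun t => hit c k (pref t.+1))) ->
  \forall t \near \oo, reached c (pref t) m.
Proof.
move=> hit_io.
have ranks_ev : \forall t \near \oo, forall k : 'I_m.+1, (m <= hits c k (pref t))%N.
  apply: filter_forall => k; have := count_io_unbounded (hit_io k) m.
  by apply: filterS => t; rewrite hits_pref.
apply: filterS ranks_ev => t ranks; apply/allP => k; rewrite mem_iota add0n => lt_km.
exact: (ranks (Ordinal lt_km)).
Qed.

(* The first time level j + N + 1 is reached for q_j is a fresh time, so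
   q_j is a lower bound for the code infinitely often. *)
Lemma code_io_ge j :
  (forall k, infinitely_often (fun t => hit (q j) k (pref t.+1))) ->
  infinitely_often (fun t => q j <= code (pref t.+1)).
Proof.
move=> hit_io N; set m := (j + N).+1.
have [t0 _ reached_t0] := reached_eventually m hit_io.
have [[|t] reached_t t_min] := ex_minnP (ex_intro _ t0 (reached_t0 t0 (leqnn t0))).
  by have := reached_le_size reached_t; rewrite size_mkseq.
have le_mt : (m <= t.+1)%N.
  by rewrite -[t.+1](size_mkseq x); exact: reached_le_size reached_t.
have [le_Nt lt_jt le_jm lt_m] :
    [/\ (N <= t)%N, (j < t.+1)%N, (j <= m)%N & (m < j + t.+2)%N].
  by move: le_mt; rewrite /m; split; lia.
exists t => //; have lt_j : (j < size (pref t.+1))%N by rewrite size_mkseq.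
rewrite /code; apply: (@le_bigmax_cond _ _ _ _ (Ordinal lt_j)) => /=.
apply/hasP; exists m; first by rewrite mem_iota size_mkseq le_jm.
by rewrite take_pref_last reached_t /=; apply/negP => /t_min; rewrite ltnn.
Qed.

(* If some rank k0 hits only finitely often for c, the levels reachable for
   thresholds c' >= c are bounded, and each of the finitely many relevant
   levels is reached at most once: eventually nothing is fresh above c. *)
Lemma fresh_eventually_below c k0 :
  (\forall t \near \oo, ~~ hit c k0 (pref t.+1)) ->
  \forall t \near \oo, forall j, c <= q j -> ~~ fresh (q j) (pref t.+1) j.
Proof.
move=> nohit.
have [B hits_le] : exists B, forall t, (hits c k0 (pref t) <= B)%N.
  have [B count_le] := count_eventually_false_bounded nohit.
  by exists B => t; rewrite hits_pref.
set M := (k0 + B)%N.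
have level_le c' t m : c <= c' -> reached c' (pref t) m -> (m <= M)%N.
  move=> le_cc' /(reached_anti le_cc') /allP reached_c.
  case: (leqP k0 m) => [le_k0m|lt_mk0]; last by rewrite ltnW // ltn_addr.
  have := reached_c k0; rewrite mem_iota add0n ltnS le_k0m => /(_ isT) le_m.
  by rewrite (leq_trans (leq_trans le_m (hits_le t))) // leq_addl.
have stable : \forall t \near \oo, forall p : 'I_M.+1 * 'I_M.+1,
    reached (q p.1) (pref t.+1) p.2 = reached (q p.1) (pref t) p.2.
  apply: filter_forall => p; apply: nondecreasing_bool_stable => t.
  exact: reached_pref_mono (leqnSn t).
apply: filterS stable => t stable j le_cq; apply/hasPn => m.
rewrite mem_iota take_pref_last => /andP[le_jm _].
apply/negP => /andP[reached_t1 not_reached_t].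
have lt_mM : (m < M.+1)%N by rewrite ltnS (level_le _ _ _ le_cq reached_t1).
have lt_jM : (j < M.+1)%N by apply: leq_ltn_trans lt_mM.
have /= := stable (Ordinal lt_jM, Ordinal lt_mM).
by rewrite reached_t1 (negbTE not_reached_t).
Qed.

Lemma code_eventually_lt c k0 b :
  (\forall t \near \oo, ~~ hit c k0 (pref t.+1)) -> c <= b ->
  \forall t \near \oo, code (pref t.+1) < b.
Proof.
move=> nohit le_cb.
apply: filterS2 (fresh_eventually_below nohit) (nbhs_infty_gtr (- b)).
move=> t fresh_below lt_bt; apply: bigmax_lt => [|j fresh_j].
  by rewrite size_mkseq ltrNl (lt_le_trans lt_bt) // ler_nat.
rewrite (lt_le_trans _ le_cb) // ltNge; apply/negP => le_cq.
by have := fresh_below j le_cq; rewrite fresh_j.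
Qed.

End CountingCode.

Lemma limn_esup_squeeze (R : realType) (u : nat -> R) (y : R) :
  (forall r : rat, ratr r < y -> infinitely_often (fun t => ratr r <= u t)) ->
  (forall b, y < b -> \forall t \near \oo, u t < b) ->
  limn_esup (fun t => (u t)%:E) = y%:E.
Proof.
move=> lower upper; apply/eqP; rewrite eq_le; apply/andP; split.
  apply/lee_addgt0Pr => e e_gt0; apply: limn_esup_le_ev.
  apply: filterS (upper (y + e) _); last by rewrite ltrDl.
  by move=> t /ltW; rewrite lee_fin.
apply/lee_subgt0Pr => e e_gt0.
have lt_y : y - e < y by rewrite ltrBlDr ltrDl.
have [r] := rat_in_itvoo lt_y.
rewrite in_itv /= => /andP[lt_er lt_ry].
apply: (@le_trans _ _ (ratr r)%:E); first by rewrite lee_fin ltW.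
apply: limn_esup_ge_io => N; have [t Nt le_rt] := lower r lt_ry N.
by exists t; rewrite ?lee_fin.
Qed.

Section Approximation.
Variables (R : realType) (A : Type) (w : nat -> seq A -> R) (eps : nat -> R).
Variables (x : nat -> A) (g : nat -> R) (y : R).
Hypothesis w_limsup : forall k, (g k)%:E = limn_esup (fun t => (w k (mkseq x t.+1))%:E).
Hypothesis g_close : forall k, `|g k - y| < eps k.

Lemma hits_io c k : c < y -> infinitely_often (fun t => c - eps k < w k (mkseq x t.+1)).
Proof.
move=> lt_cy.
have : ((c - eps k)%:E < limn_esup (fun t => (w k (mkseq x t.+1))%:E))%E.
  by rewrite -w_limsup lte_fin; move: (g_close k); rewrite ltr_norml => /andP[]; lra.
by move=> /limn_esup_gt_io io N; have [t Nt] := io N; rewrite lte_fin; exists t.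
Qed.

Lemma hits_finite c k : 2 * eps k < c - y ->
  \forall t \near \oo, ~~ (c - eps k < w k (mkseq x t.+1)).
Proof.
move=> small.
have : (limn_esup (fun t => (w k (mkseq x t.+1))%:E) < (c - eps k)%:E)%E.
  by rewrite -w_limsup lte_fin; move: (g_close k); rewrite ltr_norml => /andP[]; lra.
by move=> /limn_esup_lt_ev; apply: filterS => t; rewrite lte_fin -leNgt => /ltW.
Qed.

End Approximation.

Theorem mainTheorem4 (R : realType) (A : countType) (a0 : A)
    (T : seq A -> Prop) (HT : is_tree T) (HP : pruned T)
    (fs : nat -> branches T -> R) (f : branches T -> R) :
  (forall n, limsup_fun (fs n)) ->
  (forall e : R, 0 < e -> exists N : nat, forall n : nat, (N <= n)%N ->
     forall x : branches T, `|fs n x - f x| < e) ->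
  limsup_fun f.
Proof.
move=> limsup_fs unif.
pose eps k : R := k.+1%:R^-1.
have eps_gt0 k : 0 < eps k by rewrite invr_gt0 ltr0n.
have [N close] := choice (fun k => unif (eps k) (eps_gt0 k)).
have [w w_limsup] := choice (fun k => limsup_fs (N k)).
pose q j : R := ratr (odflt 0 (unpickle j)).
have qE r : q (pickle r) = ratr r by rewrite /q pickleK.
pose hit c k s := c - eps k < w k s.
have hit_anti c c' k s : c <= c' -> hit c' k s -> hit c k s.
  by move=> le_cc'; apply: le_lt_trans; rewrite lerD2r.
exists (code hit q) => x; symmetry.
have x_limsup k := w_limsup k x.
have x_close k := close k _ (leqnn _) x.
apply: limn_esup_squeeze.
  (* below f x: the rational r = q (pickle r) is a limsup lower bound *)
  move=> r lt_rf; rewrite -qE; apply: code_io_ge => k; rewrite qE.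
  exact: hits_io x_limsup x_close _ _ lt_rf.
(* above f x: some rank k0 hits only finitely often for a rational r < b *)
move=> b lt_fb; have [r] := rat_in_itvoo lt_fb; rewrite in_itv /= => /andP[lt_fr lt_rb].
have half_gt0 : 0 < (ratr r - f x) / 2 by rewrite divr_gt0 // subr_gt0.
have [k0 _ eps_small] := near_infty_natSinv_lt (PosNum half_gt0).
apply: (code_eventually_lt q hit_anti (k0 := k0) _ (ltW lt_rb)).
apply: hits_finite x_limsup x_close _ _ _.
by have /= := eps_small k0 (leqnn _); rewrite -/(eps k0); lra.
Qed.
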